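(* Let $B_J=L+U\in\mathbb R^{n\times n}$ with $L$ strictly lower triangular, $U$ strictly upper triangular, $L\ne O$ and $U^{(j)}_c\ne O$ for all $j=2,\dots,n$. Then the iteration matrix $T(\mathcal B_{FUTC})$ of the splitting $\mathcal B_{FUTC}=(U^{(n)}_c,U^{(n-1)}_c,\dots,U^{(2)}_c,L)$ and the backward Gauss–Seidel iteration matrix $B_{bGS}=(I-U)^{-1}L$ have the same nonzero eigenvalues.
   Context: For $j\in\{2,\dots,n\}$, $U^{(j)}_c$ is the $n\times n$ matrix whose $j$-th column agrees with the $j$-th column of $U$ in rows $i\le j-1$ and which is zero elsewhere (the $j$-th column of $U$). For $B\in\mathbb R^{n\times n}$, a splitting of $B$ of order $d\ge1$ is an ordered $d$-tuple $\mathcal B=(B_1,\dots,B_d)$ of real $n\times n$ matrices with $B_p\neq O$ for all $p$, $\sum_{p=1}^d B_p=B$, and $B_p\circ B_q=O$ (Hadamard product) for $p\ne q$. The iteration matrix of $\mathcal B$ is the $dn\times dn$ matrix $T(\mathcal B)=(I_{dn}-\mathcal L)^{-1}\mathcal U$, where $\mathcal L,\mathcal U$ are $d\times d$ block matrices with $n\times n$ blocks, $\mathcal L_{ij}=B_j$ if $i>j$ and $O$ otherwise, $\mathcal U_{ij}=B_j$ if $i\le j$ and $O$ otherwise. *)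

From HB Require Import structures.
From mathcomp Require Import all_boot all_order all_algebra.
From mathcomp Require Import reals.
From mathcomp Require Import complex.

Set Implicit Arguments.
Unset Strict Implicit.
Unset Printing Implicit Defensive.

Import Order.TTheory GRing.Theory Num.Theory.
Local Open Scope ring_scope.

Lemma blk_idx_proof (d n : nat) (i : 'I_(d * n)) : (i %/ n < d)%N.
Proof.
case: n i => [|n] i; first by case: i => i /=; rewrite muln0.
by rewrite ltn_divLR // ltn_ord.
Qed.

Lemma blk_off_proof (d n : nat) (i : 'I_(d * n)) : (i %% n < n)%N.
Proof.
case: n i => [|n] i; first by case: i => i /=; rewrite muln0.
by rewrite ltn_mod.
Qed.

Definition blk_idx (d n : nat) (i : 'I_(d * n)) : 'I_d := Ordinal (blk_idx_proof i).
Definition blk_off (d n : nat) (i : 'I_(d * n)) : 'I_n := Ordinal (blk_off_proof i).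

Definition blockmx {K : pzRingType} (d n : nat) (F : 'I_d -> 'I_d -> 'M[K]_n)
  : 'M[K]_(d * n) :=
  \matrix_(i, j) F (blk_idx i) (blk_idx j) (blk_off i) (blk_off j).

Definition is_splitting {K : pzRingType} (n d : nat) (B : 'M[K]_n)
  (Bs : 'I_d -> 'M[K]_n) : Prop :=
  [/\ (0 < d)%N, forall p, Bs p != 0, \sum_p Bs p = B &
      forall p q, p != q -> forall i j, Bs p i j * Bs q i j = 0].

Definition splitL {K : pzRingType} (n d : nat) (Bs : 'I_d -> 'M[K]_n) :=
  blockmx (fun p q => if (q < p)%N then Bs q else 0).
Definition splitU {K : pzRingType} (n d : nat) (Bs : 'I_d -> 'M[K]_n) :=
  blockmx (fun p q => if (p <= q)%N then Bs q else 0).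

Definition iter_mx {K : comUnitRingType} (n d : nat) (Bs : 'I_d -> 'M[K]_n)
  : 'M[K]_(d * n) :=
  invmx (1%:M - splitL Bs) *m splitU Bs.

(* U_c^{(j)} (j 1-indexed, 2 <= j <= n): keeps column j of U in rows
   1..j-1 and is zero elsewhere.  With 0-based indices: column k = j-1,
   rows i < k. *)
Definition Ucol {K : pzRingType} (n : nat) (U : 'M[K]_n) (j : nat) : 'M[K]_n :=
  \matrix_(i, k) if ((k : nat) == j.-1) && (i < k)%N then U i k else 0.

(* The splitting B_FUTC = (U_c^{(n)}, U_c^{(n-1)}, ..., U_c^{(2)}, L),
   of order n: its p-th component (p = 0..n-1, 0-based) is U_c^{(n-p)}
   for p < n-1 and L for p = n-1. *)
Definition B_FUTC {K : pzRingType} (n : nat) (L U : 'M[K]_n) : 'I_n -> 'M[K]_n :=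
  fun p => if (p < n.-1)%N then Ucol U (n - p) else L.

Definition B_bGS {K : comUnitRingType} (n : nat) (L U : 'M[K]_n) : 'M[K]_n :=
  invmx (1%:M - U) *m L.

Definition cmx {R : rcfType} (m : nat) (A : 'M[R]_m) : 'M[R[i]]_m :=
  map_mx (fun x : R => (x%:C)%C) A.

(* Write a left eigenvector of T(B_FUTC) for lambda <> 0 as blocks (W_1, ..., W_n) and
   let s be their sum.  Each of the first n - 1 components U_c^(j) has column j as its
   only nonzero column, so its block equation forces the corresponding block to live on
   column j, and strict upper triangularity of U kills the contribution of the
   preceding blocks: that block is the column-j part of s U.  The equation for the
   last component L gives W_n = lambda^-1 s L.  Summing, s = s U + lambda^-1 s L, i.e.
   s L = lambda s (I - U), so s is a left eigenvector of B_bGS; conversely these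
   formulas rebuild the blocks from a left eigenvector of B_bGS. *)

From HB Require Import structures.
From mathcomp Require Import all_boot all_order all_algebra.
From mathcomp Require Import reals.
From mathcomp Require Import complex.
From mathcomp Require Import zify.

Set Implicit Arguments.
Unset Strict Implicit.
Unset Printing Implicit Defensive.
Import Order.TTheory GRing.Theory Num.Theory.
Local Open Scope ring_scope.

Section BlockIndex.
Variables d n : nat.

Lemma blk_join_proof (p : 'I_d) (k : 'I_n) : (p * n + k < d * n)%N.
Proof. case: p k => p hp [k hk] /=; nia. Qed.

Definition blk_join (p : 'I_d) (k : 'I_n) : 'I_(d * n) :=
  Ordinal (blk_join_proof p k).

Lemma blk_idx_join p k : blk_idx (blk_join p k) = p.
Proof.
apply: val_inj => /=; case: n k => [|n'] [k hk] //=.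
by rewrite divnMDl // divn_small // addn0.
Qed.

Lemma blk_off_join p k : blk_off (blk_join p k) = k.
Proof.
apply: val_inj => /=; case: n k => [|n'] [k hk] //=.
by rewrite modnMDl modn_small.
Qed.

Lemma blk_joinK (i : 'I_(d * n)) : blk_join (blk_idx i) (blk_off i) = i.
Proof. by apply: val_inj => /=; rewrite -divn_eq. Qed.

Lemma sum_blk (V : nmodType) (F : 'I_(d * n) -> V) :
  \sum_(i < d * n) F i = \sum_(p < d) \sum_(k < n) F (blk_join p k).
Proof.
rewrite pair_bigA /= (reindex (fun pk : 'I_d * 'I_n => blk_join pk.1 pk.2)) //=.
exists (fun i => (blk_idx i, blk_off i)) => [[p k] _|i _] /=.
  by rewrite blk_idx_join blk_off_join.
by rewrite blk_joinK.
Qed.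

End BlockIndex.

Section BlockRows.
Variables (K : pzRingType) (d n : nat).

Definition rblock (w : 'rV[K]_(d * n)) (p : 'I_d) : 'rV[K]_n :=
  \row_k w 0 (blk_join p k).

Definition row_of_blocks (W : 'I_d -> 'rV[K]_n) : 'rV[K]_(d * n) :=
  \row_i W (blk_idx i) 0 (blk_off i).

Lemma rblock_row_of_blocks W p : rblock (row_of_blocks W) p = W p.
Proof. by apply/rowP => k; rewrite !mxE blk_idx_join blk_off_join. Qed.

Lemma rblock_inj (w w' : 'rV[K]_(d * n)) :
  (forall p, rblock w p = rblock w' p) -> w = w'.
Proof.
move=> ww'; apply/rowP => i; rewrite -(blk_joinK i).
by have /rowP/(_ (blk_off i)) := ww' (blk_idx i); rewrite !mxE.
Qed.

Lemma rblock0 p : rblock 0 p = 0.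
Proof. by apply/rowP => k; rewrite !mxE. Qed.

Lemma rblockB (w w' : 'rV[K]_(d * n)) p :
  rblock (w - w') p = rblock w p - rblock w' p.
Proof. by apply/rowP => k; rewrite !mxE. Qed.

Lemma rblockZ a (w : 'rV[K]_(d * n)) p : rblock (a *: w) p = a *: rblock w p.
Proof. by apply/rowP => k; rewrite !mxE. Qed.

Lemma rblock_mulmx_blockmx (w : 'rV[K]_(d * n)) (F : 'I_d -> 'I_d -> 'M[K]_n) q :
  rblock (w *m blockmx F) q = \sum_p rblock w p *m F p q.
Proof.
apply/rowP => k; rewrite !mxE sum_blk summxE; apply: eq_bigr => p _.
rewrite !mxE; apply: eq_bigr => j _.
by rewrite !mxE !blk_idx_join !blk_off_join.
Qed.

Lemma rblock_mulmx_splitU (Bs : 'I_d -> 'M[K]_n) w q :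
  rblock (w *m splitU Bs) q = (\sum_(p < d | (p <= q)%N) rblock w p) *m Bs q.
Proof.
rewrite rblock_mulmx_blockmx mulmx_suml [RHS]big_mkcond /=.
by apply: eq_bigr => p _; case: ifP; rewrite ?mulmx0.
Qed.

Lemma rblock_mulmx_splitL (Bs : 'I_d -> 'M[K]_n) w q :
  rblock (w *m splitL Bs) q = (\sum_(p < d | (q < p)%N) rblock w p) *m Bs q.
Proof.
rewrite rblock_mulmx_blockmx mulmx_suml [RHS]big_mkcond /=.
by apply: eq_bigr => p _; case: ifP; rewrite ?mulmx0.
Qed.

End BlockRows.

Section LeftEigen.
Variable K : fieldType.

Lemma eigenvalue_invmx_mulmx m (A B : 'M[K]_m) a : A \in unitmx ->
  eigenvalue (invmx A *m B) a <->
  exists2 w : 'rV_m, w *m B = a *: (w *m A) & w != 0.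
Proof.
move=> uA; split.
  move=> /eigenvalueP [v hv nv]; exists (v *m invmx A).
    by rewrite mulmxA in hv; rewrite hv -mulmxA mulVmx // mulmx1.
  by apply: contraNneq nv => h; rewrite -[v]mulmx1 -(mulVmx uA) mulmxA h mul0mx.
move=> [w hw nw]; apply/eigenvalueP; exists (w *m A).
  by rewrite mulmxA -(mulmxA w) mulmxV // mulmx1.
by apply: contraNneq nw => h; rewrite -[w]mulmx1 -(mulmxV uA) mulmxA h mul0mx.
Qed.

Lemma unitmx_1_splitL d n (Bs : 'I_d -> 'M[K]_n) : 1%:M - splitL Bs \in unitmx.
Proof.
rewrite unitmxE det_trig.
  by rewrite big1 ?unitr1 // => i _; rewrite !mxE eqxx ltnn mxE subr0.
apply/is_trig_mxP => i j lt_ij; rewrite !mxE.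
have -> : (i == j) = false by apply/negbTE/eqP => eq_ij; rewrite eq_ij ltnn in lt_ij.
have -> : (blk_idx j < blk_idx i)%N = false.
  by apply/negbTE; rewrite -leqNgt leq_div2r // ltnW.
by rewrite mxE subr0.
Qed.

Definition block_left_eigen d n (Bs : 'I_d -> 'M[K]_n) (a : K)
    (W : 'I_d -> 'rV[K]_n) :=
  forall q : 'I_d, (\sum_(p < d | (p <= q)%N) W p) *m Bs q =
            a *: (W q - (\sum_(p < d | (q < p)%N) W p) *m Bs q).

Lemma eigenvalue_iter_mx d n (Bs : 'I_d -> 'M[K]_n) a :
  eigenvalue (iter_mx Bs) a <->
  exists2 W, block_left_eigen Bs a W & exists p, W p != 0.
Proof.
rewrite /iter_mx eigenvalue_invmx_mulmx ?unitmx_1_splitL //.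
have blocksE w q : rblock (a *: (w *m (1%:M - splitL Bs))) q =
    a *: (rblock w q - (\sum_(p < d | (q < p)%N) rblock w p) *m Bs q).
  by rewrite mulmxBr mulmx1 rblockZ rblockB rblock_mulmx_splitL.
split=> [[w wE nz_w] | [W WE [p0 nz_Wp0]]].
  exists (rblock w) => [q|].
    by rewrite -rblock_mulmx_splitU wE blocksE.
  have [p nz_wp | w0] := pickP (fun p => rblock w p != 0); first by exists p.
  case/eqP: nz_w; apply: rblock_inj => p.
  by rewrite rblock0; apply/eqP; rewrite -[_ == _]negbK w0.
exists (row_of_blocks W).
  apply: rblock_inj => q; rewrite rblock_mulmx_splitU blocksE.
  under eq_bigr do rewrite rblock_row_of_blocks.
  under [in RHS]eq_bigr do rewrite rblock_row_of_blocks.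
  by rewrite rblock_row_of_blocks WE.
by apply: contraNneq nz_Wp0 => W0; rewrite -(rblock_row_of_blocks W) W0 rblock0.
Qed.

End LeftEigen.

Section DeltaEntries.
Variable K : pzRingType.

Lemma mulmx_delta_diagE m n (A : 'M[K]_(m, n)) (j : 'I_n) r s :
  (A *m delta_mx j j) r s = A r j * (s == j)%:R.
Proof.
rewrite mxE (bigD1 j) //= big1 ?addr0 => [|k ne_kj]; first by rewrite mxE eqxx.
by rewrite mxE (negbTE ne_kj) mulr0.
Qed.

Lemma delta_diag_mulmxE m n (A : 'M[K]_(m, n)) (i : 'I_m) r s :
  (delta_mx i i *m A) r s = (r == i)%:R * A i s.
Proof.
rewrite mxE (bigD1 i) //= big1 ?addr0 => [|k ne_ki]; first by rewrite mxE eqxx andbT.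
by rewrite mxE (negbTE ne_ki) andbF mul0r.
Qed.

End DeltaEntries.

Section StrictlyUpper.
Variables (K : fieldType) (n : nat) (U : 'M[K]_n).
Hypothesis U_upper : forall i j : 'I_n, (j <= i)%N -> U i j = 0.

Lemma unitmx_1_upper : 1%:M - U \in unitmx.
Proof.
rewrite unitmxE -det_tr det_trig.
  by rewrite big1 ?unitr1 // => i _; rewrite !mxE eqxx U_upper // subr0.
apply/is_trig_mxP => i j lt_ij; rewrite !mxE.
have -> : (j == i) = false by apply/negbTE/eqP => eq_ji; rewrite eq_ji ltnn in lt_ij.
by rewrite U_upper ?subr0 // ltnW.
Qed.

Lemma delta_mulmx_upper_delta (i j : 'I_n) : (j <= i)%N ->
  delta_mx i i *m U *m delta_mx j j = 0.
Proof.
move=> le_ji; apply/matrixP => r s.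
by rewrite mulmx_delta_diagE delta_diag_mulmxE U_upper // mulr0 mul0r mxE.
Qed.

Lemma upper_mulmx_delta0 (c : 'I_n) : c = 0%N :> nat -> U *m delta_mx c c = 0.
Proof.
by move=> c0; apply/matrixP => r s; rewrite mulmx_delta_diagE U_upper ?c0 // mul0r mxE.
Qed.

End StrictlyUpper.

Section FUTC.
Variables (K : fieldType) (n : nat) (L U : 'M[K]_n.+1).
Hypothesis U_upper : forall i j : 'I_n.+1, (j <= i)%N -> U i j = 0.
Variable a : K.
Hypothesis a_neq0 : a != 0.

(* Projection onto column [rev_ord q] = n - q (0-based), the only column of the
   q-th component U_c^(n+1-q). *)
Local Notation E q := (delta_mx (rev_ord q) (rev_ord q) : 'M[K]_n.+1).

Lemma B_FUTC_col (q : 'I_n.+1) : (q < n)%N -> B_FUTC L U q = U *m E q.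
Proof.
move=> lt_qn; rewrite /B_FUTC /= lt_qn; apply/matrixP => i k.
rewrite mxE mulmx_delta_diagE; have -> : ((n.+1 - q).-1 = n - q)%N by lia.
case: eqP => [k_rev | ne_k]; last first.
  by rewrite (_ : (k == rev_ord q) = false) ?mulr0 //; apply/negbTE/eqP => /(congr1 val).
have -> : k = rev_ord q by apply: val_inj.
by rewrite eqxx mulr1; case: ltnP => // le_k_i; rewrite U_upper.
Qed.

Lemma B_FUTC_last (q : 'I_n.+1) : (n <= q)%N -> B_FUTC L U q = L.
Proof. by rewrite /B_FUTC /= ltnNge => ->. Qed.

Definition futc_blocks (x : 'rV[K]_n.+1) (q : 'I_n.+1) : 'rV[K]_n.+1 :=
  if (q < n)%N then x *m U *m E q else a^-1 *: (x *m L).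

Lemma sum_futc_blocks x :
  \sum_q futc_blocks x q = x *m U + a^-1 *: (x *m L).
Proof.
rewrite big_ord_recr /= {2}/futc_blocks ltnn; congr (_ + _).
have sumE : \sum_q E q = 1%:M by rewrite mx1_sum_delta [RHS](reindex_inj rev_ord_inj).
have U_last : U *m E ord_max = 0 by apply: upper_mulmx_delta0 => //=; lia.
rewrite -[in RHS](mulmx1 (x *m U)) -sumE big_ord_recr /= mulmxDr.
rewrite -[X in _ + X]mulmxA U_last mulmx0 addr0 mulmx_sumr.
by apply: eq_bigr => q _; rewrite /futc_blocks /= ltn_ord.
Qed.

Lemma sum_futc_blocks_id x :
  \sum_q futc_blocks x q = x <-> x *m L = a *: (x *m (1%:M - U)).
Proof.
rewrite sum_futc_blocks mulmxBr mulmx1; split=> [xE | xE].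
  by rewrite -{2}xE addrAC subrr add0r scalerA mulfV // scale1r.
by rewrite xE scalerA mulVf // scale1r addrCA subrr addr0.
Qed.

Section ColumnSupport.
Variables (W : 'I_n.+1 -> 'rV[K]_n.+1) (q : 'I_n.+1).
Hypothesis W_supp : forall p : 'I_n.+1, (p <= q)%N -> W p *m E p = W p.

Lemma head_sum_mulmx_col : (\sum_(p < n.+1 | (p <= q)%N) W p) *m (U *m E q) = 0.
Proof.
rewrite mulmx_suml big1 // => p le_pq.
rewrite -W_supp // -mulmxA (mulmxA (E p)) delta_mulmx_upper_delta ?mulmx0 //=; lia.
Qed.

Lemma tail_sum_mulmx_col :
  (\sum_(p < n.+1 | (q < p)%N) W p) *m (U *m E q) = (\sum_p W p) *m (U *m E q).
Proof.
rewrite [in RHS](bigID (fun p : 'I_n.+1 => (p <= q)%N)) /= mulmxDl.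
rewrite head_sum_mulmx_col add0r; congr (_ *m _).
by apply: eq_bigl => p; rewrite ltnNge.
Qed.

End ColumnSupport.

Lemma sums_at_last (W : 'I_n.+1 -> 'rV[K]_n.+1) (q : 'I_n.+1) : (n <= q)%N ->
  \sum_(p < n.+1 | (p <= q)%N) W p = \sum_p W p /\
  \sum_(p < n.+1 | (q < p)%N) W p = 0.
Proof.
move=> le_nq; have le_all (p : 'I_n.+1) : (p <= q)%N by apply: leq_trans (leq_ord p) le_nq.
split; first by apply: eq_bigl => p; rewrite le_all.
by rewrite big_pred0 // => p; rewrite ltnNge le_all.
Qed.

Lemma futc_eigen_blocksE W : block_left_eigen (B_FUTC L U) a W ->
  forall q, W q = futc_blocks (\sum_p W p) q.
Proof.
move=> WE.
have W_supp (p : 'I_n.+1) : (p < n)%N -> W p *m E p = W p.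
  move=> lt_pn; move: (WE p); rewrite B_FUTC_col // => /(congr1 (fun M => a^-1 *: M)).
  rewrite scalerA mulVf // scale1r => /eqP; rewrite eq_sym subr_eq => /eqP ->.
  by rewrite mulmxDl -scalemxAl -!mulmxA mul_delta_mx.
move=> q; case: (ltnP q n) => [lt_qn | le_nq].
  have W_supp_q (p : 'I_n.+1) : (p <= q)%N -> W p *m E p = W p.
    by move=> le_pq; apply: W_supp; apply: leq_ltn_trans lt_qn.
  move: (WE q); rewrite /futc_blocks lt_qn B_FUTC_col //.
  rewrite head_sum_mulmx_col // tail_sum_mulmx_col // => /esym/eqP.
  by rewrite scalemx_eq0 (negbTE a_neq0) subr_eq0 mulmxA => /eqP.
move: (WE q); rewrite /futc_blocks ltnNge le_nq B_FUTC_last //.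
have [-> ->] := sums_at_last W le_nq.
by rewrite mul0mx subr0 => ->; rewrite scalerA mulVf // scale1r.
Qed.

Lemma futc_blocks_eigen x : x *m L = a *: (x *m (1%:M - U)) ->
  block_left_eigen (B_FUTC L U) a (futc_blocks x).
Proof.
move=> /sum_futc_blocks_id sum_x q.
case: (ltnP q n) => [lt_qn | le_nq].
  have supp (p : 'I_n.+1) : (p <= q)%N -> futc_blocks x p *m E p = futc_blocks x p.
    move=> le_pq; rewrite /futc_blocks (leq_ltn_trans le_pq lt_qn).
    by rewrite -mulmxA mul_delta_mx.
  rewrite B_FUTC_col // head_sum_mulmx_col // tail_sum_mulmx_col // sum_x.
  by rewrite [futc_blocks x q]/futc_blocks lt_qn mulmxA subrr scaler0.
have [-> ->] := sums_at_last (futc_blocks x) le_nq.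
rewrite B_FUTC_last //.
rewrite sum_x mul0mx subr0 /futc_blocks ltnNge le_nq /=.
by rewrite scalerA mulfV // scale1r.
Qed.

Lemma eigenvalue_iter_FUTC :
  eigenvalue (iter_mx (B_FUTC L U)) a <-> eigenvalue (B_bGS L U) a.
Proof.
rewrite eigenvalue_iter_mx /B_bGS eigenvalue_invmx_mulmx ?unitmx_1_upper //.
split=> [[W WE [p nz_Wp]] | [x xE nz_x]].
  have W_blocks := futc_eigen_blocksE WE.
  exists (\sum_p W p).
    by apply/sum_futc_blocks_id; apply: eq_bigr => q _; rewrite -W_blocks.
  apply: contraNneq nz_Wp => sum0.
  by rewrite W_blocks sum0 /futc_blocks !mul0mx scaler0 if_same.
exists (futc_blocks x); first exact: futc_blocks_eigen.
have [p nz_p | all0] := pickP (fun p => futc_blocks x p != 0); first by exists p.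
case/eqP: nz_x; rewrite -(proj2 (sum_futc_blocks_id x) xE) big1 // => p _.
by apply/eqP; rewrite -[_ == _]negbK all0.
Qed.

End FUTC.

Section MapMx.
Variables (K K' : fieldType) (f : {rmorphism K -> K'}).

Lemma map_iter_mx d n (Bs : 'I_d -> 'M[K]_n) (Bs' : 'I_d -> 'M[K']_n) :
  (forall p, map_mx f (Bs p) = Bs' p) -> map_mx f (iter_mx Bs) = iter_mx Bs'.
Proof.
move=> BsE; rewrite /iter_mx map_mxM map_invmx map_mxB map_mx1.
congr (invmx (_ - _) *m _); apply/matrixP => i j; rewrite !mxE.
  by case: ifP; rewrite -?BsE ?mxE ?raddf0.
by case: ifP; rewrite -?BsE ?mxE ?raddf0.
Qed.

Lemma map_B_FUTC n (L U : 'M[K]_n) p :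
  map_mx f (B_FUTC L U p) = B_FUTC (map_mx f L) (map_mx f U) p.
Proof.
rewrite /B_FUTC; case: ifP => // _.
by apply/matrixP => i j; rewrite !mxE; case: ifP; rewrite ?raddf0.
Qed.

Lemma map_B_bGS n (L U : 'M[K]_n) :
  map_mx f (B_bGS L U) = B_bGS (map_mx f L) (map_mx f U).
Proof. by rewrite /B_bGS map_mxM map_invmx map_mxB map_mx1. Qed.

End MapMx.

Theorem theorem6p1 (R : realType) (n : nat) (L U : 'M[R]_n) :
  (forall i j : 'I_n, (i <= j)%N -> L i j = 0) ->
  (forall i j : 'I_n, (j <= i)%N -> U i j = 0) ->
  L != 0 ->
  (forall j : nat, (2 <= j <= n)%N -> Ucol U j != 0) ->
  forall lambda : R[i], lambda != 0 ->
    (eigenvalue (cmx (iter_mx (B_FUTC L U))) lambda <->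
     eigenvalue (cmx (B_bGS L U)) lambda).
Proof.
case: n L U => [|n] L U _ U_upper nz_L _ lambda nz_lambda.
  by rewrite thinmx0 eqxx in nz_L.
rewrite /cmx -/(map_mx (real_complex R) _) (map_iter_mx (map_B_FUTC _ L U)).
rewrite map_B_bGS; apply: eigenvalue_iter_FUTC => // i j le_ji.
by rewrite mxE U_upper ?raddf0.
Qed.
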